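(* Let $S=(G,P,\Lambda,I)$ be a completely simple semigroup with non-singular sandwich matrix $P$, and let $\mathbf{1}=(1,1_G,1)$. Then the equation $x=y$ is equivalent over $S$ (has the same solution set in $S^2$) to a system of the form $\{t_i(x,y)=\mathbf{1}\mid i\in\mathcal{I}\}$, where each $t_i$ is an $\mathcal{L}_S$-term.
   Context: Rees representation: a completely simple semigroup $S=(G,P,\Lambda,I)$ is given by a group $G$, index sets $\Lambda,I$ (each containing an element $1$), and a matrix $P=(p_{i\lambda})_{i\in I,\lambda\in\Lambda}$ over $G$ normalised so that $p_{1\lambda}=p_{i1}=1_G$; elements are triples $(\lambda,g,i)$ with product $(\lambda,g,i)(\mu,h,j)=(\lambda,gp_{i\mu}h,j)$ and inversion $(\lambda,g,i)^{-1}=(\lambda,p_{i\lambda}^{-1}g^{-1}p_{i\lambda}^{-1},i)$. $P$ is non-singular if it has no two equal rows and no two equal columns. The language $\mathcal{L}_S$ is $\{\cdot,{}^{-1}\}$ plus a constant for each element of $S$; terms are built from variables and constants using products and ${}^{-1}$. Two systems are equivalent over $S$ if they have the same solution set. *)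

Set Implicit Arguments.

Record Group := {
  gcar :> Type;
  gmul : gcar -> gcar -> gcar;
  ginv : gcar -> gcar;
  gone : gcar;
  gmulA : forall a b c, gmul a (gmul b c) = gmul (gmul a b) c;
  gmul1l : forall a, gmul gone a = a;
  gmul1r : forall a, gmul a gone = a;
  gmulVl : forall a, gmul (ginv a) a = gone;
  gmulVr : forall a, gmul a (ginv a) = gone
}.

Definition rees_elt (G : Group) (Lam I : Type) : Type := (Lam * gcar G * I)%type.

Definition rees_mul (G : Group) (Lam I : Type) (P : I -> Lam -> G)
  (a b : rees_elt G Lam I) : rees_elt G Lam I :=
  match a, b with
  | (l, g, i), (m, h, j) => (l, gmul G g (gmul G (P i m) h), j)
  end.

Definition rees_inv (G : Group) (Lam I : Type) (P : I -> Lam -> G)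
  (a : rees_elt G Lam I) : rees_elt G Lam I :=
  match a with
  | (l, g, i) =>
      (l, gmul G (ginv G (P i l)) (gmul G (ginv G g) (ginv G (P i l))), i)
  end.

Inductive var2 := Vx | Vy.

(* Terms of the language L_S = {., ^-1} + constants from S, in variables x, y. *)
Inductive term (A : Type) :=
  | TVar : var2 -> term A
  | TConst : A -> term A
  | TMul : term A -> term A -> term A
  | TInv : term A -> term A.

Fixpoint eval_term (A : Type) (mul : A -> A -> A) (inv : A -> A)
  (x y : A) (t : term A) : A :=
  match t with
  | TVar _ Vx => x
  | TVar _ Vy => y
  | TConst a => a
  | TMul t1 t2 => mul (eval_term mul inv x y t1) (eval_term mul inv x y t2)
  | TInv t1 => inv (eval_term mul inv x y t1)
  end.

From Stdlib Require Import Setoid.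

(* The maximal subgroup {(l1, g, i1)} is a copy of G with identity (l1, 1, i1).
   Sandwiching x = (l, g, i) between this identity and the constant (m, 1, i1)
   lands in it as (l1, g p_im, i1); sandwiching (l1, 1, k) x lands there as
   (l1, p_kl g, i1).  Equality in a group is the equation u v^-1 = identity, so
   x = y yields one equation per m and per k.  Conversely the probe at m = l1
   gives g = h, and then rows i, j (resp. columns l, l') of P agree, so
   non-singularity gives i = j and l = l'. *)

Section GroupFacts.
Variable G : Group.

Lemma ginv1 : ginv G (gone G) = gone G.
Proof. rewrite <- (gmul1l G (ginv G (gone G))). apply gmulVr. Qed.

Lemma gmulV_eq1 (a b : G) : gmul G a (ginv G b) = gone G <-> a = b.
Proof.
  split.
  - intro H. rewrite <- (gmul1r G a), <- (gmulVl G b), gmulA, H. apply gmul1l.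
  - intros ->. apply gmulVr.
Qed.

Lemma gmul_cancel_l (a b c : G) : gmul G a b = gmul G a c -> b = c.
Proof.
  intro H. rewrite <- (gmul1l G b), <- (gmul1l G c), <- (gmulVl G a),
    <- !gmulA, H. reflexivity.
Qed.

Lemma gmul_cancel_r (a b c : G) : gmul G b a = gmul G c a -> b = c.
Proof.
  intro H. rewrite <- (gmul1r G b), <- (gmul1r G c), <- (gmulVr G a),
    !gmulA, H. reflexivity.
Qed.

End GroupFacts.

Section NormalisedRees.
Variables (G : Group) (Lam I : Type) (l1 : Lam) (i1 : I) (P : I -> Lam -> G).
Hypothesis Pnorm_row : forall l : Lam, P i1 l = gone G.
Hypothesis Pnorm_col : forall i : I, P i l1 = gone G.

Let S := rees_elt G Lam I.
Let eval (x y : S) := eval_term (rees_mul P) (rees_inv P) x y.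

Definition rees_one : S := (l1, gone G, i1).

Definition tdiv (t s : term S) : term S := TMul t (TInv s).

Definition col_probe (m : Lam) (t : term S) : term S :=
  TMul (TMul (TMul (TConst rees_one) t) (TConst (m, gone G, i1))) (TConst rees_one).

Definition row_probe (k : I) (t : term S) : term S :=
  TMul (TMul (TMul (TConst rees_one) (TConst (l1, gone G, k))) t) (TConst rees_one).

Lemma eval_col_probe x y t m l g i :
  eval x y t = (l, g, i) ->
  eval x y (col_probe m t) = (l1, gmul G g (P i m), i1).
Proof.
  intro Ht. unfold eval in *; simpl; rewrite Ht; simpl.
  rewrite ?Pnorm_row, ?Pnorm_col, ?gmul1l, ?gmul1r. reflexivity.
Qed.

Lemma eval_row_probe x y t k l g i :
  eval x y t = (l, g, i) ->
  eval x y (row_probe k t) = (l1, gmul G (P k l) g, i1).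
Proof.
  intro Ht. unfold eval in *; simpl; rewrite Ht; simpl.
  rewrite ?Pnorm_row, ?Pnorm_col, ?gmul1l, ?gmul1r. reflexivity.
Qed.

Lemma eval_tdiv_eq_one x y t s a b :
  eval x y t = (l1, a, i1) -> eval x y s = (l1, b, i1) ->
  eval x y (tdiv t s) = rees_one <-> a = b.
Proof.
  intros Ht Hs. unfold eval in *; simpl; rewrite Ht, Hs; simpl.
  rewrite Pnorm_row, ginv1, !gmul1l, gmul1r.
  split.
  - intro H. injection H. apply gmulV_eq1.
  - intro H. apply gmulV_eq1 in H. rewrite H. reflexivity.
Qed.

Definition col_test (m : Lam) : term S :=
  tdiv (col_probe m (TVar _ Vx)) (col_probe m (TVar _ Vy)).

Definition row_test (k : I) : term S :=
  tdiv (row_probe k (TVar _ Vx)) (row_probe k (TVar _ Vy)).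

Lemma col_test_eq_one m l g i l' h j :
  eval (l, g, i) (l', h, j) (col_test m) = rees_one <->
  gmul G g (P i m) = gmul G h (P j m).
Proof. apply eval_tdiv_eq_one; eapply eval_col_probe; reflexivity. Qed.

Lemma row_test_eq_one k l g i l' h j :
  eval (l, g, i) (l', h, j) (row_test k) = rees_one <->
  gmul G (P k l) g = gmul G (P k l') h.
Proof. apply eval_tdiv_eq_one; eapply eval_row_probe; reflexivity. Qed.

Hypothesis Pnonsing_rows : forall i j : I, (forall l : Lam, P i l = P j l) -> i = j.
Hypothesis Pnonsing_cols : forall l m : Lam, (forall i : I, P i l = P i m) -> l = m.

Lemma rees_eq_probes (l l' : Lam) (g h : G) (i j : I) :
  (l, g, i) = (l', h, j) <->
  (forall m, gmul G g (P i m) = gmul G h (P j m)) /\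
  (forall k, gmul G (P k l) g = gmul G (P k l') h).
Proof.
  split.
  - intro Heq. injection Heq as -> -> ->. split; reflexivity.
  - intros [Hcol Hrow].
    assert (Hgh : g = h).
    { specialize (Hcol l1). rewrite !Pnorm_col, !gmul1r in Hcol. exact Hcol. }
    subst h.
    assert (Hij : i = j).
    { apply Pnonsing_rows. intro m. eapply gmul_cancel_l, Hcol. }
    assert (Hll : l = l').
    { apply Pnonsing_cols. intro k. eapply gmul_cancel_r, Hrow. }
    subst. reflexivity.
Qed.

Lemma rees_eq_tests (x y : S) :
  x = y <->
  (forall m, eval x y (col_test m) = rees_one) /\
  (forall k, eval x y (row_test k) = rees_one).
Proof.
  destruct x as [[l g] i], y as [[l' h] j].
  setoid_rewrite col_test_eq_one. setoid_rewrite row_test_eq_one.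
  apply rees_eq_probes.
Qed.

End NormalisedRees.

Theorem mainTheorem4 (G : Group) (Lam I : Type) (l1 : Lam) (i1 : I)
  (P : I -> Lam -> G)
  (Pnorm_row : forall l : Lam, P i1 l = gone G)
  (Pnorm_col : forall i : I, P i l1 = gone G)
  (Pnonsing_rows : forall i j : I, (forall l : Lam, P i l = P j l) -> i = j)
  (Pnonsing_cols : forall l m : Lam, (forall i : I, P i l = P i m) -> l = m) :
  exists (J : Type) (t : J -> term (rees_elt G Lam I)),
    forall x y : rees_elt G Lam I,
      x = y <->
      (forall j : J,
         eval_term (rees_mul P) (rees_inv P) x y (t j) = (l1, gone G, i1)).
Proof.
  exists (Lam + I)%type.
  exists (fun s => match s with
           | inl m => col_test G Lam I l1 i1 m
           | inr k => row_test G Lam I l1 i1 k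
           end).
  intros x y.
  rewrite (rees_eq_tests G Lam I l1 i1 P Pnorm_row Pnorm_col Pnonsing_rows Pnonsing_cols).
  split.
  - intros [Hcol Hrow] [m | k]; auto.
  - intro H. split; [intro m; exact (H (inl m)) | intro k; exact (H (inr k))].
Qed.
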